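(* Let $n\ge1$, $\pi\in\Pi_n$, and let $j$ be a closer or a transient of $\pi$. Then $$\mathrm{al}(\varphi(\pi);j)=\mathrm{al}(\pi;j),\qquad \mathrm{cr}(\varphi(\pi);j)=\mathrm{ne}(\pi;j),\qquad \mathrm{ne}(\varphi(\pi);j)=\mathrm{cr}(\pi;j),$$ where $\varphi:\Pi_n\to\Pi_n$ is the map described below. Construction of $\varphi(\pi)$: start with $V'=\emptyset$ and an empty edge set $E'$. For $i=1,\dots,n$: if $i$ is an opener of $\pi$, add $i$ to $V'$; if $i$ is a singleton of $\pi$, do nothing; if $i$ is a closer or transient of $\pi$, let $x$ be the $\gamma_i(\pi)$-th largest element of $V'$, add the edge $(x,i)$ to $E'$, remove $x$ from $V'$, and if $i$ is a transient of $\pi$ add $i$ to $V'$. Then $\varphi(\pi)$ is the partition of $[n]$ whose edge set is $E'$.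
   Context: A partition of $[n]=\{1,\dots,n\}$ is a set of pairwise disjoint nonempty subsets (blocks) whose union is $[n]$; $\Pi_n$ is the set of partitions of $[n]$. The edges of $\pi$ are the pairs $(i,j)$, $i<j$, with $i,j$ consecutive elements of the same block; $i$ is the left-hand and $j$ the right-hand endpoint. For a block $B$ with $|B|\ge2$, its minimum is an opener, its maximum a closer, its other elements transients; the element of a one-element block is a singleton. Two edges $e_1=(i_1,j_1)$, $e_2=(i_2,j_2)$ form a crossing with $e_1$ as initial edge if $i_1<i_2<j_1<j_2$; a nesting with $e_2$ as interior edge if $i_1<i_2<j_2<j_1$; an alignment with $e_1$ as initial edge if $i_1<j_1\le i_2<j_2$. For a closer or transient $j$ of $\pi$, $\mathrm{cr}(\pi;j)$ (resp. $\mathrm{ne}(\pi;j)$, $\mathrm{al}(\pi;j)$) is the number of crossings whose initial edge (resp. nestings whose interior edge, alignments whose initial edge) has $j$ as right-hand endpoint. For $i\in[n]$, the vacant vertices of $\pi$ before $i$ are the elements $x\le i-1$ that are the left endpoint of an edge $(x,y)$ of $\pi$ with $y\ge i$. For $i$ a closer or transient with edge $(j,i)$, $j<i$, $\gamma_i(\pi)$ is the rank of $j$ among the vacant vertices before $i$ in increasing order. (The construction of $\varphi$ is well defined and $\varphi(\pi)$ has the same closers and transients as $\pi$.) *)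

(* Ground set [n] = {1,...,n} is modelled by 'I_n = {0,...,n-1}
   via the order-preserving shift k |-> k+1; all notions below depend only on the
   order, so nothing changes. *)
From mathcomp Require Import all_boot all_order.
Set Implicit Arguments. Unset Strict Implicit. Unset Printing Implicit Defensive.

Section Partitions.
Variable n : nat.
Local Notation T := 'I_n.
Implicit Types (P : {set {set T}}) (i j x y : T).

Definition is_edge P i j : bool :=
  [&& i < j, j \in pblock P i &
      [forall k : T, (k \in pblock P i) ==> ~~ ((i < k) && (k < j))]].

Definition is_opener P i : bool :=
  (2 <= #|pblock P i|) && [forall k : T, (k \in pblock P i) ==> (i <= k)].
Definition is_closer P i : bool :=
  (2 <= #|pblock P i|) && [forall k : T, (k \in pblock P i) ==> (k <= i)].
Definition is_transient P i : bool :=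
  (2 <= #|pblock P i|) && ~~ is_opener P i && ~~ is_closer P i.
Definition is_singleton P i : bool := #|pblock P i| == 1.

Definition cr P j : nat :=
  #|[set q : (T * T) * (T * T) |
      [&& is_edge P q.1.1 q.1.2, is_edge P q.2.1 q.2.2, q.1.2 == j &
          [&& q.1.1 < q.2.1, q.2.1 < q.1.2 & q.1.2 < q.2.2]]]|.
Definition ne P j : nat :=
  #|[set q : (T * T) * (T * T) |
      [&& is_edge P q.1.1 q.1.2, is_edge P q.2.1 q.2.2, q.2.2 == j &
          [&& q.1.1 < q.2.1, q.2.1 < q.2.2 & q.2.2 < q.1.2]]]|.
Definition al P j : nat :=
  #|[set q : (T * T) * (T * T) |
      [&& is_edge P q.1.1 q.1.2, is_edge P q.2.1 q.2.2, q.1.2 == j &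
          [&& q.1.1 < q.1.2, q.1.2 <= q.2.1 & q.2.1 < q.2.2]]]|.

Definition vacant P i : {set T} :=
  [set x : T | (x < i) && [exists y : T, is_edge P x y && (i <= y)]].

Definition rank_in (S : {set T}) x : nat := #|[set y in S | y <= x]|.

Definition gamma P i : nat :=
  if [pick j | is_edge P j i] is Some j then rank_in (vacant P i) j else 0.

Definition kth_largest (S : {set T}) (k : nat) (d : T) : T :=
  nth d (sort (fun a b : T => b <= a) (enum S)) k.-1.

Definition phi_step P (st : {set T} * seq (T * T)) i : {set T} * seq (T * T) :=
  let: (V, E) := st in
  if is_opener P i then (i |: V, E)
  else if is_closer P i || is_transient P i then
    let x := kth_largest V (gamma P i) i in
    let V1 := V :\ x in
    ((if is_transient P i then i |: V1 else V1), (x, i) :: E)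
  else (V, E).

Definition phi_edges P : seq (T * T) :=
  (foldl (phi_step P) (set0, [::]) (enum 'I_n)).2.

Definition partition_of_edges (E : seq (T * T)) : {set {set T}} :=
  equivalence_partition
    (fun x y => connect (fun a b => ((a, b) \in E) || ((b, a) \in E)) x y)
    [set: T].

Definition phi P : {set {set T}} := partition_of_edges (phi_edges P).

End Partitions.

(* Read a partition from left to right: the vertices before i still waiting
   for their right neighbour are its vacant vertices before i.  The set V'
   maintained by the construction is exactly the vacant set of phi(pi) before
   i, and it has as many elements as the vacant set of pi before i, since both
   gain a vertex at each opener or transient and lose one at each closer or
   transient.  For an edge (j0, j) of any partition, the crossings (resp.
   nestings) whose initial (resp. interior) edge ends at j correspond to the
   vacant vertices before j to the right (resp. left) of j0, and the
   alignments to the left-hand endpoints at or after j.  As pi joins j to the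
   gamma-th smallest vacant vertex and phi(pi) to the gamma-th largest one,
   the two counts are exchanged, while both partitions have the same
   left-hand endpoints (the openers and transients). *)

From mathcomp Require Import all_boot all_order zify.
Set Implicit Arguments. Unset Strict Implicit. Unset Printing Implicit Defensive.

Lemma card_setDU (T : finType) (S L R : {set T}) :
  L \subset S -> [disjoint R & S] -> #|(S :\: L) :|: R| + #|L| = #|S| + #|R|.
Proof.
move=> sLS dRS; have dRD : [disjoint R & S :\: L] := disjointWr (subsetDl S L) dRS.
rewrite cardsU cardsD (setIidPr sLS) setIC (disjoint_setI0 dRD) cards0.
by have := subset_leq_card sLS; lia.
Qed.

Lemma cards_cond1 (T : finType) (b : bool) (x : T) : #|[set c | b && (c == x)]| = b.
Proof.
case: b; last by apply/eqP; rewrite cards_eq0; apply/eqP/setP=> c; rewrite !inE.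
by rewrite /= -(cards1 x); apply: eq_card => c; rewrite !inE.
Qed.

Section Ranks.
Variable n : nat.
Local Notation T := 'I_n.
Implicit Types (S : {set T}) (y : T).

Lemma rank_in_add_gt S y : rank_in S y + #|[set c in S | y < c]| = #|S|.
Proof.
rewrite /rank_in -(cardsID [set c : T | c <= y] S); congr (_ + _).
  by apply: eq_card => c; rewrite !inE.
by apply: eq_card => c; rewrite !inE ltnNge andbC.
Qed.

Lemma rank_inE S y : y \in S -> rank_in S y = #|[set c in S | c < y]|.+1.
Proof.
move=> yS; rewrite /rank_in.
have -> : [set c in S | c <= y] = y |: [set c in S | c < y].
  apply/setP=> c; rewrite !inE leq_eqVlt val_eqE.
  by case: eqVneq => [->|]; rewrite ?yS.
by rewrite cardsU1 inE ltnn andbF.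
Qed.

Lemma kth_largest_spec S k d : 0 < k <= #|S| ->
  kth_largest S k d \in S /\ #|[set c in S | kth_largest S k d < c]| = k.-1.
Proof.
case/andP=> k_gt0 k_le; rewrite /kth_largest.
set s := sort _ (enum S).
have mem_s : s =i S by move=> c; rewrite mem_sort mem_enum.
have s_uniq : uniq s by rewrite sort_uniq enum_uniq.
have k_lt : k.-1 < size s by rewrite size_sort -cardE; lia.
have s_gt : pairwise (fun a b : T => b < a) s.
  have s_ge : pairwise (fun a b : T => b <= a) s.
    rewrite -sorted_pairwise; first by apply: sort_sorted => a b; apply: leq_total.
    by move=> a b c ba cb; apply: leq_trans cb ba.
  have : pairwise [rel a b : T | (b <= a) && (a != b)] s.
    by rewrite pairwise_relI s_ge -uniq_pairwise.
  by apply: sub_pairwise => a b /andP[ba ab]; rewrite ltn_neqAle ba andbT eq_sym val_eqE.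
set x := nth d s k.-1.
have s_split : s = take k.-1 s ++ x :: drop k s.
  by rewrite -[k in drop k _]prednK // -drop_nth // cat_take_drop.
split; first by rewrite -mem_s mem_nth.
move: s_gt; rewrite s_split pairwise_cat pairwise_cons.
case/and4P=> /allrelP take_gt _ /allP drop_lt _.
rewrite -(size_takel (ltnW k_lt)) -(card_uniqP (take_uniq _ s_uniq)).
apply: eq_card => c; rewrite !inE -mem_s; apply/andP/idP=> [[cs xc]|ct].
  have : c \in take k.-1 s ++ x :: drop k s by rewrite -s_split.
  rewrite mem_cat inE => /or3P[// | /eqP cx | cd].
    by rewrite cx ltnn in xc.
  by have := drop_lt c cd; rewrite ltnNge ltnW.
by rewrite s_split mem_cat ct take_gt ?mem_head.
Qed.

End Ranks.

Section ArcDiagrams.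
Variable n : nat.
Local Notation T := 'I_n.

Definition arc_diagram (e : rel T) :=
  [/\ forall a b, e a b -> a < b,
      forall a b b', e a b -> e a b' -> b = b' &
      forall a a' b, e a b -> e a' b -> a = a'].

Definition vacant_of (e : rel T) (i : nat) : {set T} :=
  [set x : T | (x < i) && [exists y, e x y && (i <= y)]].

Definition starts_arc (E : seq (T * T)) (c : T) := [exists d, (c, d) \in E].

Lemma starts_arc_cons E (a b c : T) : starts_arc ((a, b) :: E) c = (c == a) || starts_arc E c.
Proof.
apply/existsP/orP=> [[d]|[/eqP->|/existsP[d cd]]]; last 2 first.
- by exists b; rewrite mem_head.
- by exists d; rewrite inE cd orbT.
rewrite inE => /orP[/eqP[-> _]|cd]; first by left.
by right; apply/existsP; exists d.
Qed.

Lemma arc_diagram_cons E (a b : T) :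
  arc_diagram (fun u v => (u, v) \in E) -> a < b -> ~~ starts_arc E a ->
  (forall c, (c, b) \notin E) -> arc_diagram (fun u v => (u, v) \in (a, b) :: E).
Proof.
case=> E_lt E_fun E_inj ab a_free b_free.
have a_free' v : (a, v) \notin E by apply: contra a_free => av; apply/existsP; exists v.
have mem_cons u v : ((u, v) \in (a, b) :: E) = (u == a) && (v == b) || ((u, v) \in E).
  by rewrite inE xpair_eqE.
split=> [u v|u v v'|u u' v]; rewrite !mem_cons.
- by case/orP=> [/andP[/eqP-> /eqP->] //|]; apply: E_lt.
- case/orP=> [/andP[/eqP-> /eqP->]|uv] /orP[/andP[/eqP ua /eqP->] //|uv'].
  + by move: (a_free' v'); rewrite uv'.
  + by move: (a_free' v); rewrite -ua uv.
  + exact: E_fun uv uv'.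
- case/orP=> [/andP[/eqP-> /eqP->]|uv] /orP[/andP[/eqP-> /eqP vb] //|u'v].
  + by move: (b_free u'); rewrite u'v.
  + by move: (b_free u); rewrite -vb uv.
  + exact: E_inj uv u'v.
Qed.

Lemma vacant_succ (e : rel T) (t : T) : arc_diagram e ->
  vacant_of e t.+1 =
  (vacant_of e t :\: [set a | e a t]) :|: [set c | [exists y, e t y] && (c == t)].
Proof.
case=> e_lt e_fun _; apply/setP=> c; rewrite !inE.
case: (eqVneq c t) => [->|ct].
  rewrite ltnSn ltnn andbF /= andbT; apply: eq_existsb => y.
  by apply/andb_idr=> /e_lt.
have -> : (c < t.+1) = (c < t) by rewrite ltnS leq_eqVlt val_eqE (negbTE ct).
rewrite /= andbF orbF; case: (ltnP c t) => [_ /=|_]; last by rewrite andbF.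
apply/existsP/andP=> [[y /andP[ecy ty]]|[ect /existsP[y /andP[ecy ty]]]].
  split; first by apply: contraTN ty => /(e_fun _ _ _ ecy) ->; rewrite ltnn.
  by apply/existsP; exists y; rewrite ecy ltnW.
exists y; rewrite ecy ltn_neqAle ty andbT.
by apply: contraNneq ect => /val_inj ->.
Qed.

Lemma vacant_arc_source (e : rel T) (a t : T) : arc_diagram e -> e a t -> a \in vacant_of e t.
Proof.
by case=> e_lt _ _ eat; rewrite inE e_lt //=; apply/existsP; exists t; rewrite eat leqnn.
Qed.

Lemma card_vacant_succ (e : rel T) (t : T) : arc_diagram e ->
  #|vacant_of e t.+1| + [exists a, e a t] = #|vacant_of e t| + [exists y, e t y].
Proof.
move=> arc_e; have [e_lt _ e_inj] := arc_e.
have card_into : #|[set a | e a t]| = [exists a, e a t].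
  case: existsP => [[a eat]|no_a] /=.
    rewrite -(cards1 a); apply: eq_card => c; rewrite !inE.
    by apply/idP/eqP=> [/e_inj/(_ eat)|->].
  apply/eqP; rewrite cards_eq0; apply/eqP/setP=> c; rewrite !inE.
  by apply/negP=> ect; apply: no_a; exists c.
rewrite vacant_succ // -card_into -[in RHS](cards_cond1 _ t); apply: card_setDU.
  by apply/subsetP=> a; rewrite inE; apply: vacant_arc_source.
apply/pred0P=> c /=; rewrite !inE; apply/negP=> /andP[/andP[_ /eqP->] /andP[]].
by rewrite ltnn.
Qed.

Section Counting.
Variables (Q : {set {set T}}) (j0 j : T).
Hypotheses (arcQ : arc_diagram (is_edge Q)) (Qj : is_edge Q j0 j).

Lemma card_edge_pairs_fst (p : pred ((T * T) * (T * T))) :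
  #|[set q | [&& is_edge Q q.1.1 q.1.2, is_edge Q q.2.1 q.2.2, q.1.2 == j & p q]]|
  = #|[set c | [exists d, is_edge Q c d && p ((j0, j), (c, d))]]|.
Proof.
have [_ Q_fun Q_inj] := arcQ.
set A := [set q | _].
have injA : {in A &, injective (fun q => q.2.1)}.
  move=> [[a b] [c d]] [[a' b'] [c' d']]; rewrite !inE /=.
  case/and4P=> Qab Qcd /eqP bj _ /and4P[Qab' Qcd' /eqP bj' _] cc; subst b b' c'.
  by rewrite (Q_inj _ _ _ Qab Qj) (Q_inj _ _ _ Qab' Qj) (Q_fun _ _ _ Qcd Qcd').
rewrite -(card_in_imset injA); apply: eq_card => c; rewrite inE.
apply/imsetP/existsP=> [[[[a b] [c' d]]]|[d /andP[Qcd pq]]].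
  rewrite inE /= => /and4P[Qab Qcd /eqP bj pq] ->; subst b.
  by exists d; rewrite Qcd -(Q_inj _ _ _ Qab Qj).
by exists ((j0, j), (c, d)); rewrite // inE /= Qj Qcd eqxx.
Qed.

Lemma card_edge_pairs_snd (p : pred ((T * T) * (T * T))) :
  #|[set q | [&& is_edge Q q.1.1 q.1.2, is_edge Q q.2.1 q.2.2, q.2.2 == j & p q]]|
  = #|[set c | [exists d, is_edge Q c d && p ((c, d), (j0, j))]]|.
Proof.
have [_ Q_fun Q_inj] := arcQ.
set A := [set q | _].
have injA : {in A &, injective (fun q => q.1.1)}.
  move=> [[a b] [c d]] [[a' b'] [c' d']]; rewrite !inE /=.
  case/and4P=> Qab Qcd /eqP dj _ /and4P[Qab' Qcd' /eqP dj' _] aa; subst d d' a'.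
  by rewrite (Q_inj _ _ _ Qcd Qj) (Q_inj _ _ _ Qcd' Qj) (Q_fun _ _ _ Qab Qab').
rewrite -(card_in_imset injA); apply: eq_card => c; rewrite inE.
apply/imsetP/existsP=> [[[[c' d] [a b]]]|[d /andP[Qcd pq]]].
  rewrite inE /= => /and4P[Qcd Qab /eqP bj pq] ->; subst b.
  by exists d; rewrite Qcd -(Q_inj _ _ _ Qab Qj).
by exists ((c, d), (j0, j)); rewrite // inE /= Qj Qcd eqxx.
Qed.

Lemma cr_vacant : cr Q j = #|[set c in vacant_of (is_edge Q) j | j0 < c]|.
Proof.
have [Q_lt _ Q_inj] := arcQ.
rewrite /cr card_edge_pairs_fst; apply: eq_card => c; rewrite !inE /=.
apply/existsP/andP=> [[d /and4P[Qcd j0c cj jd]]|[/andP[cj /existsP[d /andP[Qcd jd]]] j0c]].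
  by rewrite cj /=; split=> //; apply/existsP; exists d; rewrite Qcd ltnW.
exists d; rewrite Qcd j0c cj ltn_neqAle jd andbT /=.
by apply: contraTneq j0c => /val_inj dj; rewrite -dj in Qcd; rewrite (Q_inj _ _ _ Qcd Qj) ltnn.
Qed.

Lemma ne_vacant : ne Q j = #|[set c in vacant_of (is_edge Q) j | c < j0]|.
Proof.
have [Q_lt _ Q_inj] := arcQ.
rewrite /ne card_edge_pairs_snd; apply: eq_card => c; rewrite !inE /=.
apply/existsP/andP=> [[d /and4P[Qcd cj0 _ jd]]|[/andP[_ /existsP[d /andP[Qcd jd]]] cj0]].
  rewrite (ltn_trans cj0 (Q_lt _ _ Qj)); split=> //.
  by apply/existsP; exists d; rewrite Qcd ltnW.
exists d; rewrite Qcd cj0 Q_lt //= ltn_neqAle jd andbT.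
by apply: contraTneq cj0 => /val_inj dj; rewrite -dj in Qcd; rewrite (Q_inj _ _ _ Qcd Qj) ltnn.
Qed.

Lemma al_out_edges : al Q j = #|[set c : T | (j <= c) && [exists d, is_edge Q c d]]|.
Proof.
have [Q_lt _ _] := arcQ.
rewrite /al card_edge_pairs_fst; apply: eq_card => c; rewrite !inE /=.
apply/existsP/andP=> [[d /and4P[Qcd _ jc _]]|[jc /existsP[d Qcd]]].
  by split=> //; apply/existsP; exists d.
by exists d; rewrite Qcd jc (Q_lt _ _ Qj) (Q_lt _ _ Qcd).
Qed.

End Counting.
End ArcDiagrams.

Definition is_left_end n (P : {set {set 'I_n}}) i := is_opener P i || is_transient P i.
Definition is_right_end n (P : {set {set 'I_n}}) i := is_closer P i || is_transient P i.

Lemma opener_not_closer n (P : {set {set 'I_n}}) i : is_opener P i -> ~~ is_closer P i.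
Proof.
case/andP=> /card_gt1P[x [y [xB yB xy]]] /forallP ge_i.
apply/negP=> /andP[_ /forallP le_i].
have eq_i k : k \in pblock P i -> k = i.
  by move=> kB; apply/val_inj/anti_leq; rewrite (implyP (le_i k)) ?(implyP (ge_i k)).
by move: xy; rewrite (eq_i x xB) (eq_i y yB) eqxx.
Qed.

Section PartitionEdges.
Variables (n : nat) (P : {set {set 'I_n}}).
Hypothesis partP : partition P [set: 'I_n].
Local Notation T := 'I_n.
Implicit Types (i x y : T).

Lemma mem_pblock_self x : x \in pblock P x.
Proof. by case/and3P: partP => /eqP cover _ _; rewrite mem_pblock cover in_setT. Qed.

Lemma pblock_eq x y : y \in pblock P x -> pblock P y = pblock P x.
Proof. by case/and3P: partP => _ triv _; apply: same_pblock. Qed.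

Lemma arc_diagram_is_edge : arc_diagram (is_edge P).
Proof.
split=> [a b /and3P[] // | a b b' | a a' b].
  move=> /and3P[ab bB /forallP between] /and3P[ab' b'B /forallP between'].
  apply: val_inj; case: (ltngtP b b') => // lt_bb'.
    by have := between' b; rewrite bB ab lt_bb'.
  by have := between b'; rewrite b'B ab' lt_bb'.
move=> /and3P[ab bB /forallP between] /and3P[a'b bB' /forallP between'].
have B_eq : pblock P a = pblock P a' by rewrite -(pblock_eq bB) (pblock_eq bB').
apply: val_inj; case: (ltngtP a a') => // lt_aa'.
  by have := between a'; rewrite B_eq mem_pblock_self lt_aa' a'b.
by have := between' a; rewrite -B_eq mem_pblock_self lt_aa' ab.
Qed.

Lemma is_left_end_later i : is_left_end P i = [exists k, (k \in pblock P i) && (i < k)].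
Proof.
have later_card2 : [exists k, (k \in pblock P i) && (i < k)] -> 1 < #|pblock P i|.
  case/existsP=> k /andP[kB ik]; apply/card_gt1P; exists i, k.
  by rewrite mem_pblock_self kB -val_eqE neq_ltn ik.
rewrite /is_left_end /is_transient; case: (boolP (is_opener P i)) => [op|_] /=.
  case/andP: op => /card_gt1P[x [y [xB yB xy]]] /forallP ge_i; apply/esym/existsP.
  have later k : k \in pblock P i -> k != i -> (k \in pblock P i) && (i < k).
    by move=> kB ki; rewrite kB ltn_neqAle (implyP (ge_i k)) // andbT eq_sym val_eqE.
  case: (eqVneq x i) => [xi|xi]; last by exists x; apply: later.
  by exists y; apply: later; rewrite // -xi eq_sym.
rewrite andbT /is_closer; case: (leqP 2 #|pblock P i|) => [_|c1] /=; last first.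
  by symmetry; apply/negbTE/negP => /later_card2; rewrite leqNgt c1.
by rewrite negb_forall; apply: eq_existsb => k; rewrite negb_imply -ltnNge.
Qed.

Lemma is_right_end_earlier i : is_right_end P i = [exists k, (k \in pblock P i) && (k < i)].
Proof.
have earlier_card2 : [exists k, (k \in pblock P i) && (k < i)] -> 1 < #|pblock P i|.
  case/existsP=> k /andP[kB ki]; apply/card_gt1P; exists i, k.
  by rewrite mem_pblock_self kB -val_eqE neq_ltn ki orbT.
rewrite /is_right_end /is_transient; case: (boolP (is_closer P i)) => [cl|_] /=.
  case/andP: cl => /card_gt1P[x [y [xB yB xy]]] /forallP le_i; apply/esym/existsP.
  have earlier k : k \in pblock P i -> k != i -> (k \in pblock P i) && (k < i).
    by move=> kB ki; rewrite kB ltn_neqAle (implyP (le_i k)) // andbT val_eqE.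
  case: (eqVneq x i) => [xi|xi]; last by exists x; apply: earlier.
  by exists y; apply: earlier; rewrite // -xi eq_sym.
rewrite andbT /is_opener; case: (leqP 2 #|pblock P i|) => [_|c1] /=; last first.
  by symmetry; apply/negbTE/negP => /earlier_card2; rewrite leqNgt c1.
by rewrite negb_forall; apply: eq_existsb => k; rewrite negb_imply -ltnNge.
Qed.

Lemma is_left_end_edge i : is_left_end P i = [exists y, is_edge P i y].
Proof.
rewrite is_left_end_later; apply/existsP/existsP=> [[k0 later_k0]|[y /and3P[iy yB _]]].
  have [k /andP[kB ik] k_min] :=
    @arg_minnP _ k0 (fun k : T => (k \in pblock P i) && (i < k)) val later_k0.
  exists k; rewrite /is_edge ik kB; apply/forallP=> m; apply/implyP=> mB.
  by apply/negP=> /andP[im mk]; have := k_min m; rewrite mB im leqNgt mk => /(_ isT).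
by exists y; rewrite yB.
Qed.

Lemma is_right_end_edge i : is_right_end P i = [exists a, is_edge P a i].
Proof.
rewrite is_right_end_earlier; apply/existsP/existsP=> [[k0 earlier_k0]|[a /and3P[ai iB _]]].
  have [k /andP[kB ki] k_max] :=
    @arg_maxnP _ k0 (fun k : T => (k \in pblock P i) && (k < i)) val earlier_k0.
  exists k; rewrite /is_edge ki (pblock_eq kB) mem_pblock_self; apply/forallP=> m.
  apply/implyP=> mB; apply/negP=> /andP[km mi].
  by have := k_max m; rewrite mB mi /= => /(_ isT); rewrite leqNgt km.
by exists a; rewrite (pblock_eq iB) mem_pblock_self ai.
Qed.

End PartitionEdges.

Lemma connect_functional_total (T : finType) (r : rel T) :
  (forall x y y', r x y -> r x y' -> y = y') ->
  forall x y z, connect r x y -> connect r x z -> connect r y z || connect r z y.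
Proof.
move=> r_fun x y z /connectP[p xp ->] xz.
elim: p x xp xz => [|w p IH] x /= => [_ xz|/andP[rxw wp] xz]; first by rewrite xz.
case/connectP: xz => [[|w' q]] /= => [_ zx | /andP[/(r_fun _ _ _ rxw) <- wq] zq].
  by apply/orP; right; rewrite zx; apply/connectP; exists (w :: p); rewrite /= ?rxw.
by apply: IH wp _; apply/connectP; exists q.
Qed.

Section EdgesOfArcDiagram.
Variables (n : nat) (E : seq ('I_n * 'I_n)).
Local Notation T := 'I_n.
Let arc : rel T := fun a b => (a, b) \in E.
Let link : rel T := fun a b => arc a b || arc b a.
Hypothesis arcE : arc_diagram arc.

Lemma connect_arc_le x y : connect arc x y -> x <= y.
Proof.
have [arc_lt _ _] := arcE.
case/connectP=> p xp ->; elim: p x xp => [|w p IH] x //= /andP[/arc_lt xw /IH wy].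
exact: ltnW (leq_trans xw wy).
Qed.

Lemma connect_arc_first x y : connect arc x y -> x < y -> exists2 w, arc x w & connect arc w y.
Proof.
case/connectP=> [[|w p]] /= => [_ -> | /andP[xw wp] ->]; first by rewrite ltnn.
by exists w => //; apply/connectP; exists p.
Qed.

(* Arcs are functional in both directions, so a walk never leaves a chain of arcs. *)
Lemma connect_link_arc x y : connect link x y -> connect arc x y || connect arc y x.
Proof.
have [_ arc_fun arc_inj] := arcE.
have rev_fun x' y1 y2 : arc y1 x' -> arc y2 x' -> y1 = y2 by apply: arc_inj.
case/connectP=> p xp ->; elim/last_ind: p xp => [|p w IH] /=; first by rewrite connect0.
rewrite rcons_path last_rcons => /andP[/IH + /orP[step|step]] => /orP[xw|wx].
- by rewrite (connect_trans xw (connect1 step)).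
- exact: connect_functional_total arc_fun _ _ _ wx (connect1 step).
- have := @connect_functional_total _ [rel a b | arc b a] rev_fun (last x p) x w.
  by rewrite !(connect_rev arc) /= orbC; apply; [exact: xw | exact: connect1 step].
- by rewrite (connect_trans (connect1 step) wx) orbT.
Qed.

Lemma connect_link_equivalence : {in [set: T] & &, equivalence_rel (connect link)}.
Proof.
have link_sym : connect_sym link by apply: sym_connect_sym => a b; rewrite /link orbC.
move=> a b c _ _ _; split=> [|ab]; first exact: connect0.
by apply/idP/idP; apply: connect_trans; rewrite // link_sym.
Qed.

Lemma partition_of_edgesP : partition (partition_of_edges E) [set: T].
Proof. exact: equivalence_partitionP connect_link_equivalence. Qed.

Lemma pblock_partition_of_edges x y :
  (y \in pblock (partition_of_edges E) x) = connect link x y.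
Proof.
by apply: pblock_equivalence_partition; rewrite ?in_setT //; apply: connect_link_equivalence.
Qed.

Lemma is_edge_partition_of_edges a b : is_edge (partition_of_edges E) a b = arc a b.
Proof.
have [arc_lt arc_fun _] := arcE.
have link_arc x y : arc x y -> connect link x y by move=> xy; apply: connect1; rewrite /link xy.
rewrite /is_edge pblock_partition_of_edges.
apply/idP/idP=> [/and3P[ab ab_link /forallP between]|ab].
  have ab_arc : connect arc a b.
    by case/orP: (connect_link_arc ab_link) => // /connect_arc_le; rewrite leqNgt ab.
  have [w aw wb] := connect_arc_first ab_arc ab.
  have := between w; rewrite pblock_partition_of_edges link_arc //= arc_lt //=.
  by rewrite ltn_neqAle (connect_arc_le wb) andbT negbK => /eqP/val_inj <-.
rewrite arc_lt // link_arc //=; apply/forallP=> k; apply/implyP.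
rewrite pblock_partition_of_edges => /connect_link_arc /orP[ak|/connect_arc_le].
  apply/negP=> /andP[lt_ak lt_kb]; have [w aw wk] := connect_arc_first ak lt_ak.
  by move: (connect_arc_le wk); rewrite (arc_fun _ _ _ aw ab) leqNgt lt_kb.
by rewrite leqNgt => /negbTE ->.
Qed.

End EdgesOfArcDiagram.

Section Construction.
Variables (n : nat) (P : {set {set 'I_n}}).
Hypothesis partP : partition P [set: 'I_n].
Local Notation T := 'I_n.

Definition phi_state (i : nat) : {set T} * seq (T * T) :=
  foldl (phi_step P) (set0, [::]) (take i (enum T)).

Lemma phi_state_succ (t : T) : phi_state t.+1 = phi_step P (phi_state t) t.
Proof.
by rewrite /phi_state (take_nth t) ?size_enum_ord // foldl_rcons nth_ord_enum.
Qed.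

Lemma phi_edges_state : phi_edges P = (phi_state n).2.
Proof. by rewrite /phi_edges /phi_state take_oversize // size_enum_ord. Qed.

Lemma phi_stepE V E t : phi_step P (V, E) t =
  let x := kth_largest V (gamma P t) t in
  ((V :\: [set c | is_right_end P t && (c == x)]) :|: [set c | is_left_end P t && (c == t)],
   if is_right_end P t then (x, t) :: E else E).
Proof.
rewrite /phi_step /is_left_end /is_right_end /=.
case: (boolP (is_opener P t)) => [op|_] /=.
  rewrite (negbTE (opener_not_closer op)) /is_transient op andbF /=.
  by congr (_, _); apply/setP=> c; rewrite !inE orbC.
case: ifP => [RPt|/norP[_ /negbTE->]]; congr (_, _); apply/setP=> c; rewrite !inE ?orbF //.
by case: (is_transient P t); rewrite !inE ?orbF // orbC.
Qed.

Lemma gamma_rank t : is_right_end P t ->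
  exists2 j0, is_edge P j0 t & gamma P t = rank_in (vacant_of (is_edge P) t) j0.
Proof.
rewrite is_right_end_edge // => /existsP[j0 j0t].
by rewrite /gamma; case: pickP => [j1 j1t | /(_ j0)]; [exists j1 | rewrite j0t].
Qed.

Lemma gamma_bounds t : is_right_end P t -> 0 < gamma P t <= #|vacant_of (is_edge P) t|.
Proof.
case/gamma_rank=> j0 j0t ->.
have j0_vacant := vacant_arc_source (arc_diagram_is_edge partP) j0t.
by rewrite -(rank_in_add_gt _ j0) (rank_inE j0_vacant) leq_addr.
Qed.

Lemma phi_pick_in (t : T) (V : {set T}) : #|V| = #|vacant_of (is_edge P) t| ->
  is_right_end P t -> kth_largest V (gamma P t) t \in V.
Proof.
move=> V_card RPt; have bounds := gamma_bounds RPt; rewrite -V_card in bounds.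
by have [] := kth_largest_spec t bounds.
Qed.

Lemma card_phi_step (t x : T) (V : {set T}) : (is_right_end P t -> x \in V) -> t \notin V ->
  #|(V :\: [set c | is_right_end P t && (c == x)]) :|: [set c | is_left_end P t && (c == t)]|
  + is_right_end P t = #|V| + is_left_end P t.
Proof.
move=> x_in t_notin; rewrite -[in LHS](cards_cond1 _ x) -[in RHS](cards_cond1 _ t).
apply: card_setDU; first by apply/subsetP=> c; rewrite inE => /andP[/x_in + /eqP->].
by apply/pred0P=> c /=; rewrite !inE; apply/negP=> /andP[/andP[_ /eqP->]]; apply/negP.
Qed.

Definition phi_invariant (i : nat) (st : {set T} * seq (T * T)) :=
  [/\ arc_diagram (fun a b => (a, b) \in st.2),
      forall a b, (a, b) \in st.2 -> (b < i) && is_left_end P a,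
      st.1 = [set c : T | [&& c < i, is_left_end P c & ~~ starts_arc st.2 c]] &
      #|st.1| = #|vacant_of (is_edge P) i| ].

Lemma phi_invariant_step (t : T) st :
  phi_invariant t st -> phi_invariant t.+1 (phi_step P st t).
Proof.
case: st => V E [arcE E_lt V_eq V_card]; rewrite phi_stepE /= in arcE E_lt V_eq V_card *.
set x := kth_largest V _ t.
have [E_arc_lt _ _] := arcE.
have t_free : ~~ starts_arc E t.
  apply/existsP=> -[d /[dup] /E_arc_lt td /E_lt /andP[dt _]].
  by move: (ltn_trans td dt); rewrite ltnn.
have t_notin : t \notin V by rewrite V_eq inE ltnn.
have x_in : is_right_end P t -> x \in V := phi_pick_in V_card.
have x_free : is_right_end P t -> [&& x < t, is_left_end P x & ~~ starts_arc E x].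
  by move/x_in; rewrite V_eq inE.
have starts_new c : starts_arc (if is_right_end P t then (x, t) :: E else E) c =
    (is_right_end P t && (c == x)) || starts_arc E c.
  by case: ifP; rewrite ?starts_arc_cons.
split=> /=.
- case: ifP => // /x_free /and3P[xt _ x_notstart].
  by apply: arc_diagram_cons => // c; apply/negP=> /E_lt; rewrite ltnn.
- move=> a b; case: ifP => [RPt|_]; last by case/E_lt/andP=> bt ->; rewrite ltnW.
  rewrite inE => /orP[/eqP[-> ->]|/E_lt/andP[bt ->]]; last by rewrite ltnW.
  by have /and3P[_ -> _] := x_free RPt; rewrite ltnSn.
- apply/setP=> c; rewrite !inE starts_new.
  case: (eqVneq c t) => [->|ct].
    have -> : is_right_end P t && (t == x) = false.
      case RPt: (is_right_end P t) => //=; have /and3P[xt _ _] := x_free RPt.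
      by rewrite -val_eqE (gtn_eqF xt).
    by rewrite (negbTE t_notin) (negbTE t_free) ltnSn.
  have -> : (c < t.+1) = (c < t) by rewrite ltnS leq_eqVlt val_eqE (negbTE ct).
  rewrite V_eq inE andbF orbF negb_or.
  by case: (c < t); case: (is_left_end P c); case: (is_right_end P t && (c == x)).
- have := card_vacant_succ t (arc_diagram_is_edge partP).
  rewrite -is_right_end_edge // -is_left_end_edge // -V_card -(card_phi_step x_in t_notin).
  by move/eqP; rewrite eqn_add2r => /eqP.
Qed.

Lemma phi_invariant_state i : i <= n -> phi_invariant i (phi_state i).
Proof.
elim: i => [_|i IH lt_in].
  by rewrite /phi_state take0; split=> //=.
by rewrite (phi_state_succ (Ordinal lt_in)); apply: phi_invariant_step; apply: IH; apply: ltnW.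
Qed.

Lemma phi_state_edges_stable i k (a b : T) : i <= k <= n -> b < i ->
  ((a, b) \in (phi_state k).2) = ((a, b) \in (phi_state i).2).
Proof.
move=> /andP[+ kn] bi; elim: k kn => [|k IH] kn; first by rewrite leqn0 => /eqP->.
rewrite leq_eqVlt => /orP[/eqP-> // | ik].
rewrite (phi_state_succ (Ordinal kn)) (surjective_pairing (phi_state k)) phi_stepE /=.
rewrite -IH ?(ltnW kn) //; case: ifP => // _; rewrite inE xpair_eqE.
by rewrite -[b == _]val_eqE /= (ltn_eqF (leq_trans bi ik)) andbF.
Qed.

Lemma phi_state_edges i (a b : T) : i <= n ->
  ((a, b) \in (phi_state i).2) = ((a, b) \in phi_edges P) && (b < i).
Proof.
move=> i_le; rewrite phi_edges_state; case: (ltnP b i) => [bi|ib].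
  by rewrite andbT (@phi_state_edges_stable i n) ?i_le /=.
have [_ E_lt _ _] := phi_invariant_state i_le.
by rewrite andbF; apply/negP=> /E_lt/andP[]; rewrite ltnNge ib.
Qed.

Lemma arc_diagram_phi_edges : arc_diagram (fun a b => (a, b) \in phi_edges P).
Proof. by have [] := phi_invariant_state (leqnn n); rewrite phi_edges_state. Qed.

Lemma is_edge_phi : is_edge (phi P) =2 (fun a b => (a, b) \in phi_edges P).
Proof. exact: is_edge_partition_of_edges arc_diagram_phi_edges. Qed.

Lemma phi_out_edge c : [exists d, is_edge (phi P) c d] = is_left_end P c.
Proof.
have [_ E_lt V_eq V_card] := phi_invariant_state (leqnn n).
have V_empty : (phi_state n).1 = set0.
  apply/eqP; rewrite -cards_eq0 V_card cards_eq0; apply/eqP/setP=> d; rewrite !inE.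
  by rewrite ltn_ord; apply/existsP=> -[y /andP[_]]; rewrite leqNgt ltn_ord.
apply/existsP/idP=> [[d]|LPc]; first by rewrite is_edge_phi phi_edges_state => /E_lt/andP[].
have : c \notin (phi_state n).1 by rewrite V_empty inE.
rewrite V_eq inE ltn_ord LPc negbK.
by case/existsP=> d cd; exists d; rewrite is_edge_phi phi_edges_state.
Qed.

Lemma vacant_phi (j : T) : vacant_of (is_edge (phi P)) j = (phi_state j).1.
Proof.
have [_ _ V_eq _] := phi_invariant_state (ltnW (ltn_ord j)).
have [_ phi_fun _] := arc_diagram_phi_edges.
apply/setP=> c; rewrite V_eq !inE; case: (ltnP c j) => //= cj.
rewrite -phi_out_edge; apply/existsP/andP=> [[d /andP[cd jd]]|[/existsP[d cd] c_free]].
  split; first by apply/existsP; exists d.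
  apply/existsP=> -[d']; rewrite phi_state_edges ?(ltnW (ltn_ord j)) // => /andP[cd' d'j].
  by rewrite is_edge_phi in cd; move: jd; rewrite (phi_fun _ _ _ cd cd') leqNgt d'j.
exists d; rewrite cd leqNgt; apply: contra c_free => dj; apply/existsP; exists d.
by rewrite phi_state_edges ?(ltnW (ltn_ord j)) // -is_edge_phi cd.
Qed.

Lemma phi_edge_into (j : T) : is_right_end P j ->
  is_edge (phi P) (kth_largest (phi_state j).1 (gamma P j) j) j.
Proof.
move=> RPj; rewrite is_edge_phi.
have := phi_state_edges (kth_largest (phi_state j).1 (gamma P j) j) j (ltn_ord j).
rewrite ltnSn andbT => <-.
by rewrite phi_state_succ (surjective_pairing (phi_state j)) phi_stepE /= RPj mem_head.
Qed.

End Construction.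

Theorem lemma2p2 (n : nat) (hn : 0 < n) (P : {set {set 'I_n}})
  (hP : partition P [set: 'I_n]) (j : 'I_n)
  (hj : is_closer P j || is_transient P j) :
  [/\ al (phi P) j = al P j,
      cr (phi P) j = ne P j &
      ne (phi P) j = cr P j].
Proof.
have arcP := arc_diagram_is_edge hP.
have arcQ : arc_diagram (is_edge (phi P)) := arc_diagram_is_edge (partition_of_edgesP _).
have [j0 Pj gammaE] := gamma_rank hP hj.
have j0_vacant := vacant_arc_source arcP Pj.
have Qx := phi_edge_into hP hj.
have [_ _ _ V_card] := phi_invariant_state hP (ltnW (ltn_ord j)).
have bounds := gamma_bounds hP hj; rewrite -V_card in bounds.
have [xV x_rank] := kth_largest_spec j bounds.
split.
- rewrite (al_out_edges arcQ Qx) (al_out_edges arcP Pj); apply: eq_card => c.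
  by rewrite !inE phi_out_edge // is_left_end_edge.
- by rewrite (cr_vacant arcQ Qx) vacant_phi // x_rank (ne_vacant arcP Pj) gammaE rank_inE.
rewrite (ne_vacant arcQ Qx) vacant_phi // (cr_vacant arcP Pj).
have := rank_in_add_gt (phi_state P j).1 (kth_largest (phi_state P j).1 (gamma P j) j).
have := rank_in_add_gt (vacant_of (is_edge P) j) j0.
rewrite (rank_inE xV) x_rank -gammaE V_card; lia.
Qed.
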